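(* Let $0<r<\min\{\frac{d\alpha_{\min}}{2d+1},\frac{\beta_{\min}}2,e^{-4}\}$ and $J=\lfloor\frac14\log(1/r)\rfloor$. Then for every $k_0\in\mathbb Z$, the sets $g_{k_0}\widetilde\Delta'_r,\ g_{k_0+1}\widetilde\Delta'_r,\dots,g_{k_0+J}\widetilde\Delta'_r$ are pairwise disjoint.
   Context: $d=m+n$; weight vectors $\boldsymbol\alpha\in(\mathbb R_{>0})^m$, $\boldsymbol\beta\in(\mathbb R_{>0})^n$ with coordinates summing to 1; $\alpha_{\min}=\min_i\alpha_i$, $\beta_{\min}=\min_j\beta_j$. $g_s=\mathrm{diag}(e^{\alpha_1s},\dots,e^{\alpha_ms},e^{-\beta_1s},\dots,e^{-\beta_ns})$ acting on the space $X_d$ of unimodular lattices in $\mathbb R^d$. $\Delta(\Lambda)=\sup_{\mathbf v\in\Lambda\setminus\{0\}}\log(1/\|\mathbf v\|)$ (sup norm); $\mathcal H(\mathcal A)=\{\Lambda:(\Lambda\setminus\{0\})\cap\mathcal A\ne\emptyset\}$; $R_r=(1-\tfrac r{2d},1+\tfrac r{2d})\times(-\sqrt r,\sqrt r)^{d-1}$; $\Delta'_r=\Delta^{-1}[0,r]\cap\mathcal H(R_r)$; $\widetilde\Delta'_r=\bigcup_{0\le s<1/2}g_{-s}\Delta'_r$. *)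

From HB Require Import structures.
From mathcomp Require Import all_boot all_order all_algebra.
From mathcomp Require Import all_classical all_reals all_analysis.
Set Implicit Arguments. Unset Strict Implicit. Unset Printing Implicit Defensive.
Import Order.TTheory GRing.Theory Num.Theory.
Local Open Scope classical_set_scope.
Local Open Scope ring_scope.

Section Defs.
Variables (R : realType) (m n : nat).
Local Notation d := (m + n)%N.

Definition supnorm (v : 'rV[R]_d) : R := \big[Order.max/0]_(i < d) `|v ord0 i|.

Definition is_unimod_lattice (L : set 'rV[R]_d) : Prop :=
  exists M : 'M[R]_d, `|\det M| = 1 /\
    L = [set (map_mx (fun z : int => z%:~R) z) *m M | z in [set: 'rV[int]_d]].

Definition Xd : set (set 'rV[R]_d) := [set L | is_unimod_lattice L].

Definition gmx (alpha : 'I_m -> R) (beta : 'I_n -> R) (s : R) : 'M[R]_d :=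
  diag_mx (\row_(i < d) match fintype.split i with
                        | inl a => expR (alpha a * s)
                        | inr b => expR (- (beta b * s)) end).

Definition gact alpha beta (s : R) (L : set 'rV[R]_d) : set 'rV[R]_d :=
  [set v *m gmx alpha beta s | v in L].
Definition gset alpha beta (s : R) (S : set (set 'rV[R]_d)) : set (set 'rV[R]_d) :=
  [set gact alpha beta s L | L in S].

Definition Delta (L : set 'rV[R]_d) : R :=
  sup [set ln ((supnorm v)^-1) | v in L `\ (0 : 'rV[R]_d)].

Definition Hset (A : set 'rV[R]_d) : set (set 'rV[R]_d) :=
  [set L | (L `\ (0 : 'rV[R]_d)) `&` A !=set0].

Definition Rbox (r : R) : set 'rV[R]_d :=
  [set v | forall i : 'I_d,
     if val i == 0%N then
       1 - r / (2 * d%:R) < v ord0 i < 1 + r / (2 * d%:R)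
     else - Num.sqrt r < v ord0 i < Num.sqrt r].

Definition Delta' (r : R) : set (set 'rV[R]_d) :=
  [set L | Xd L /\ 0 <= Delta L <= r] `&` Hset (Rbox r).

Definition Delta'tilde alpha beta (r : R) : set (set 'rV[R]_d) :=
  \bigcup_(s in [set s : R | 0 <= s < 1/2]) gset alpha beta (- s) (Delta' r).

End Defs.

From Pilot Require Import Defs.
From HB Require Import structures.
From mathcomp Require Import all_boot all_order all_algebra.
From mathcomp Require Import all_classical all_reals all_analysis.
From mathcomp Require Import ring lra zify.
Import Order.TTheory GRing.Theory Num.Theory.
Local Open Scope classical_set_scope.
Local Open Scope ring_scope.
Set Implicit Arguments. Unset Strict Implicit.

(* Every nonzero vector of a lattice in Delta'_r has sup norm at least e^-r,
   and every lattice in Delta'_r has a nonzero vector in the box R_r.  If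
   g_k1 Delta~'_r and g_k2 Delta~'_r met with k1 > k2, two lattices L1, L2 of
   Delta'_r would satisfy L1 = g_-t L2 with 1/2 < t < log(1/r)/4 + 1/2, and
   g_-t would carry the box vector of L2 to a vector of L1 of norm < e^-r: the
   coordinates scaled by e^(-alpha_i t) lose more than the slack r/(2d) of the
   box because alpha_i > 2r + r/d, and those of size < sqrt r grow by at most
   e^t <= r^(-1/4) e^(1/2). *)

Section SupNorm.
Variables (R : realType) (m n : nat).
Local Notation d := (m + n)%N.

Lemma normr_le_supnorm (v : 'rV[R]_d) i : `|v ord0 i| <= supnorm v.
Proof. by rewrite /supnorm (bigD1 i) //= le_max lexx. Qed.

Lemma supnorm_ge0 (v : 'rV[R]_d) : 0 <= supnorm v.
Proof.
rewrite /supnorm; apply: (big_ind (fun y => 0 <= y)) => // a b ha hb.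
by rewrite le_max ha.
Qed.

Lemma supnorm_lt (v : 'rV[R]_d) x :
  0 < x -> (forall i, `|v ord0 i| < x) -> supnorm v < x.
Proof.
move=> x0 h; rewrite /supnorm; apply: (big_ind (fun y => y < x)) => //.
by move=> a b ha hb; rewrite gt_max ha hb.
Qed.

Lemma normr_mulmx_le (u : 'rV[R]_d) (A : 'M[R]_d) j :
  `|(u *m A) ord0 j| <= supnorm u * \sum_k `|A k j|.
Proof.
rewrite mxE mulr_sumr; apply: le_trans (ler_norm_sum _ _ _) _.
apply: ler_sum => k _; rewrite normrM; apply: ler_wpM2r => //.
exact: normr_le_supnorm.
Qed.

(* A nonzero integer vector z has a coordinate of modulus >= 1, and
   z = (z M) M^-1 bounds it by the norm of z M. *)
Lemma unimod_lattice_supnorm_lb (L : set 'rV[R]_d) :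
  is_unimod_lattice L ->
  exists2 c, 0 < c & forall v, L v -> v != 0 -> c <= supnorm v.
Proof.
case=> M [detM ->].
have uM : M \in unitmx by rewrite unitmxE unitfE -normr_eq0 detM oner_neq0.
pose C := \sum_j \sum_k `|invmx M k j|.
have C0 : 0 <= C by apply: sumr_ge0 => j _; apply: sumr_ge0.
exists (C + 1)^-1; first by rewrite invr_gt0; lra.
move=> _ [z _ <-]; set zR := map_mx _ z => vn0.
have [j zj] : exists j, zR ord0 j != 0.
  apply/existsP; apply: contraR vn0; rewrite negb_exists => /forallP zR0.
  suff -> : zR = 0 by rewrite mul0mx.
  apply/matrixP => i k; rewrite ord1 [RHS]mxE.
  by apply/eqP; move: (zR0 k); rewrite negbK.
have zj1 : 1 <= `|zR ord0 j| by rewrite norm_intr_ge1 // mxE intr_int.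
have Cj : \sum_k `|invmx M k j| <= C.
  rewrite /C [leRHS](bigD1 j) //= lerDl.
  by apply: sumr_ge0 => k _; apply: sumr_ge0.
have := normr_mulmx_le (zR *m M) (invmx M) j; rewrite mulmxK // => zjC.
have s0 := supnorm_ge0 (zR *m M).
rewrite -[X in X <= _]mul1r ler_pdivrMr; last lra.
nra.
Qed.

Lemma expRN_le_supnorm (L : set 'rV[R]_d) r :
  Xd L -> Delta L <= r -> forall v, L v -> v != 0 -> expR (- r) <= supnorm v.
Proof.
move=> XL DLr v Lv vn0.
have [c c0 Lc] := unimod_lattice_supnorm_lb XL.
have v0 : 0 < supnorm v by exact: lt_le_trans c0 (Lc v Lv vn0).
have Lv' : (L `\ 0) v by split=> //; exact/eqP.
have hs : has_sup [set ln (supnorm w)^-1 | w in L `\ (0 : 'rV[R]_d)].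
  split; first by exists (ln (supnorm v)^-1), v.
  exists (ln c^-1) => _ [w [Lw /eqP wn0] <-].
  have w0 : 0 < supnorm w by exact: lt_le_trans c0 (Lc w Lw wn0).
  by rewrite ler_ln ?posrE ?invr_gt0 // lef_pV2 ?posrE // Lc.
have := sup_upper_bound hs (ex_intro2 _ _ v Lv' erefl).
rewrite -/(Delta L) lnV ?posrE // => vD.
by rewrite -[supnorm v]lnK ?posrE // ler_expR; lra.
Qed.

End SupNorm.

Section Flow.
Variables (R : realType) (m n : nat) (alpha : 'I_m -> R) (beta : 'I_n -> R).
Local Notation d := (m + n)%N.
Local Notation gmx := (gmx alpha beta).
Local Notation gact := (gact alpha beta).

Definition rate (i : 'I_d) : R :=
  match fintype.split i with inl a => alpha a | inr b => - beta b end.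

Lemma mul_gmxE s (u : 'rV[R]_d) i :
  (u *m gmx s) ord0 i = u ord0 i * expR (rate i * s).
Proof.
rewrite /Defs.gmx mul_mx_diag !mxE /rate; case: (fintype.split i) => a //.
by rewrite mulNr.
Qed.

Lemma mul_gmxA (u : 'rV[R]_d) s t : u *m gmx s *m gmx t = u *m gmx (s + t).
Proof.
by apply/matrixP => i j; rewrite ord1 !mul_gmxE -mulrA -expRD mulrDr.
Qed.

Lemma mul_gmx0 (u : 'rV[R]_d) : u *m gmx 0 = u.
Proof. by apply/matrixP => i j; rewrite ord1 mul_gmxE mulr0 expR0 mulr1. Qed.

Lemma gactD s t (L : set 'rV[R]_d) : gact t (gact s L) = gact (s + t) L.
Proof. by rewrite /Defs.gact image_comp; apply: eq_imagel => v _; exact: mul_gmxA. Qed.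

Lemma gactK s : cancel (gact s) (gact (- s)).
Proof.
by move=> L; rewrite gactD subrr; apply: eq_image_id => v _; exact: mul_gmx0.
Qed.

Lemma gset_Delta'tilde_gact K r (L : set 'rV[R]_d) :
  gset alpha beta K (Delta'tilde alpha beta r) L ->
  exists s L', [/\ 0 <= s < 1/2, Delta' r L' & L = gact (K - s) L'].
Proof.
move=> [_ [s s01 [L' DL' <-]] <-].
by exists s, L'; rewrite gactD addrC.
Qed.

End Flow.

Lemma expRN4_lt_half (R : realType) : expR (-4) < 1/2 :> R.
Proof.
have e4 : expR (-4) * expR 4 = 1 :> R by rewrite -expRD addNr expR0.
have := expR_ge1Dx (4 : R); have := expR_gt0 (-4 : R); nra.
Qed.

Lemma contracted_coord_lt (R : realType) (r x a t y : R) :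
  0 < r -> 0 <= x -> 2 * r + 2 * x < a -> 1/2 < t -> `|y| < 1 + x ->
  `|y * expR (a * - t)| < expR (- r).
Proof.
move=> r0 x0 xa t1 y1; rewrite normrM (gtr0_norm (expR_gt0 _)).
apply: (lt_le_trans (y := expR x * expR (a * - t))).
  by rewrite ltr_pM2r ?expR_gt0 //; apply: lt_le_trans y1 (expR_ge1Dx _).
by rewrite -expRD ler_expR; nra.
Qed.

(* [sqrt r * e^t < r^(1/4) * e^(1/2) < e^(-1/2) < e^(-r)] *)
Lemma expanded_coord_lt (R : realType) (r b t y : R) :
  0 < r -> r < expR (-4) -> 0 <= b <= 1 -> 0 <= t ->
  t < ln r^-1 / 4 + 1/2 -> `|y| < Num.sqrt r ->
  `|y * expR (- b * - t)| < expR (- r).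
Proof.
move=> r0 r4 /andP [b0 b1] t0 tr yr; rewrite normrM (gtr0_norm (expR_gt0 _)).
have rS : Num.sqrt r * Num.sqrt r = r by rewrite -expr2 sqr_sqrtr // ltW.
have S0 : 0 < Num.sqrt r by rewrite sqrtr_gt0.
have lnS : ln (Num.sqrt r) = ln r / 2.
  by have := lnM S0 S0; rewrite rS; lra.
have lnr : ln r < -4 by rewrite -(expRK (-4)) ltr_ln // posrE expR_gt0.
have r2 := lt_trans r4 (expRN4_lt_half R).
rewrite lnV ?posrE // in tr.
apply: (le_lt_trans (y := `|y| * expR t)).
  by rewrite ler_wpM2l // ler_expR mulrNN ler_piMl.
apply: (lt_le_trans (y := Num.sqrt r * expR t)); first by rewrite ltr_pM2r ?expR_gt0.
rewrite -[Num.sqrt r]lnK ?posrE // -expRD ler_expR lnS; lra.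
Qed.

Lemma sum_eq1_ord_gt0 (R : numDomainType) m (f : 'I_m -> R) :
  \sum_i f i = 1 -> (0 < m)%N.
Proof. by case: m f => // f; rewrite big_ord0 => /esym/eqP; rewrite oner_eq0. Qed.

Section Disjointness.
Variables (R : realType) (m n : nat) (alpha : 'I_m -> R) (beta : 'I_n -> R).
Variable r : R.
Hypothesis m_gt0 : (0 < m)%N.
Hypotheses (beta_ge0 : forall j, 0 <= beta j) (beta_le1 : forall j, beta j <= 1).
Hypotheses (r_pos : 0 < r) (r_e : r < expR (-4)).
Hypothesis r_alpha : forall i, r < (m + n)%:R * alpha i / (2 * (m + n)%:R + 1).
Local Notation d := (m + n)%N.
Local Notation gmx := (gmx alpha beta).
Local Notation gact := (gact alpha beta).

Lemma supnorm_gmx_Rbox_lt t (w : 'rV[R]_d) :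
  1/2 < t -> t < ln r^-1 / 4 + 1/2 -> Rbox r w ->
  supnorm (w *m gmx (- t)) < expR (- r).
Proof.
move=> t1 t2 wR; apply: supnorm_lt => [|i]; first exact: expR_gt0.
have D0 : 0 < d%:R :> R by rewrite ltr0n addn_gt0 m_gt0.
have S1 : Num.sqrt r < 1.
  rewrite -sqrtr1 ltr_sqrt //.
  by apply: lt_trans r_e (lt_trans (expRN4_lt_half R) _); lra.
have := wR i; set x := r / (2 * d%:R) => wi.
have x0 : 0 <= x by rewrite divr_ge0 ?ltW // mulr_gt0.
have xD : x * (2 * d%:R) = r by rewrite mulfVK // mulf_neq0 // lt0r_neq0.
rewrite mul_gmxE /rate; case: splitP wi => [a ia | b ib] wi.
- apply: (contracted_coord_lt r_pos x0 _ t1).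
    by have := r_alpha a; rewrite ltr_pdivlMr; nra.
  case: ifP wi => _ /andP [lo hi]; rewrite ltr_norml; apply/andP; split; lra.
- have i_neq0 : (val i == 0%N) = false by apply/negbTE; rewrite -lt0n /= ib ltn_addr.
  rewrite i_neq0 in wi; case/andP: wi => lo hi; apply: expanded_coord_lt => //; try lra.
    by rewrite beta_ge0 beta_le1.
  by rewrite ltr_norml lo.
Qed.

Lemma Delta'_gact_neq (L1 L2 : set 'rV[R]_d) t :
  Delta' r L1 -> Delta' r L2 -> 1/2 < t -> t < ln r^-1 / 4 + 1/2 ->
  L1 <> gact (- t) L2.
Proof.
move=> [[XL1 /andP [_ DL1]] _] [_ [w [[L2w w0] wR]]] t1 t2 E.
have L1u : L1 (w *m gmx (- t)) by rewrite E; exists w.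
have u0 : w *m gmx (- t) != 0.
  apply/eqP => u0; apply: w0.
  by rewrite -[w](mul_gmx0 alpha beta) -(addNr t) -mul_gmxA u0 mul0mx.
have := expRN_le_supnorm XL1 DL1 L1u u0.
by rewrite leNgt supnorm_gmx_Rbox_lt.
Qed.

Lemma gset_Delta'tilde_disjoint (K1 K2 : R) :
  1 <= K1 - K2 <= ln r^-1 / 4 ->
  [disjoint gset alpha beta K1 (Delta'tilde alpha beta r)
     & gset alpha beta K2 (Delta'tilde alpha beta r)].
Proof.
move=> /andP [lo hi]; apply/disj_set2P; rewrite -subset0 => L [].
move=> /gset_Delta'tilde_gact [s1 [L1 [/andP [s10 s11] DL1 E1]]].
move=> /gset_Delta'tilde_gact [s2 [L2 [/andP [s20 s21] DL2 E2]]].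
have E : L1 = gact (- ((K1 - s1) - (K2 - s2))) L2.
  by rewrite -(gactK alpha beta (K1 - s1) L1) -E1 E2 gactD [in RHS]opprB.
by apply: Delta'_gact_neq DL1 DL2 _ _ E; lra.
Qed.

End Disjointness.

Theorem proposition4p4 (R : realType) (m n : nat)
  (alpha : 'I_m -> R) (beta : 'I_n -> R)
  (alpha_pos : forall i, 0 < alpha i) (beta_pos : forall j, 0 < beta j)
  (alpha_sum : \sum_i alpha i = 1) (beta_sum : \sum_j beta j = 1)
  (r : R) (r_pos : 0 < r)
  (r_alpha : forall i, r < (m + n)%:R * alpha i / (2 * (m + n)%:R + 1))
  (r_beta : forall j, r < beta j / 2)
  (r_e : r < expR (-4)) :
  let J : int := Num.floor (ln (r^-1) / 4) in
  forall k0 k1 k2 : int,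
    k0 <= k1 <= k0 + J -> k0 <= k2 <= k0 + J -> k1 != k2 ->
    [disjoint gset alpha beta k1%:~R (Delta'tilde alpha beta r)
       & gset alpha beta k2%:~R (Delta'tilde alpha beta r)].
Proof.
move=> J k0 k1 k2 k1J k2J k12.
have m_gt0 := sum_eq1_ord_gt0 alpha_sum.
have beta_ge0 j : 0 <= beta j by exact: ltW.
have beta_le1 j : beta j <= 1.
  by rewrite -beta_sum (bigD1 j) //= lerDl sumr_ge0.
have apart k k' : k0 <= k <= k0 + J -> k0 <= k' <= k0 + J -> k' < k ->
    [disjoint gset alpha beta k%:~R (Delta'tilde alpha beta r)
       & gset alpha beta k'%:~R (Delta'tilde alpha beta r)].
  move=> kJ k'J lt_k'k.
  apply: (gset_Delta'tilde_disjoint m_gt0 beta_ge0 beta_le1 r_pos r_e r_alpha).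
  have /andP [lo hi] : 1 <= k - k' <= J by lia.
  by rewrite -intrB ler1z lo /= (le_trans _ (floor_le _)) // ler_int.
by case/lt_total/orP: k12 => [lt12|lt21]; [rewrite disj_set_sym|]; exact: apart.
Qed.
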